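(* Let $P_n,P^*\in\Delta(\Delta(V))$ with $P_n\to P^*$ weakly. For $p\in\mathbb{R}$ and $P\in\Delta(\Delta(V))$ define $\pi(p,P)=\int_{\{\nu:\ \mathbb{E}_\nu[v]\ge p\}}(p-\mathbb{E}_\nu[c(v)])\,dP(\nu)$. Then for all $p\in\mathbb{R}$ and $\delta>0$, $$\limsup_{n\to\infty}\pi(p+\delta,P_n)-\delta\ \le\ \pi(p,P^* )\ \le\ \liminf_{n\to\infty}\pi(p-\delta,P_n)+\delta.$$
   Context: $V\subset\mathbb{R}$ is compact and $c:V\to\mathbb{R}$ is continuous with $v-c(v)\ge0$ for all $v\in V$. $\Delta(V)$ is the set of Borel probability measures on $V$ with the weak topology, and $\Delta(\Delta(V))$ the Borel probability measures on $\Delta(V)$, with weak convergence. *)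

From HB Require Import structures.
From mathcomp Require Import all_boot all_order all_algebra.
From mathcomp Require Import all_classical all_reals all_analysis.
Set Implicit Arguments. Unset Strict Implicit. Unset Printing Implicit Defensive.
Import Order.TTheory GRing.Theory Num.Theory.
Import numFieldNormedType.Exports.
Local Open Scope classical_set_scope.
Local Open Scope ring_scope.

Section DeltaV.
Context {R : realType}.

Definition bcont (f : R -> R) : Prop :=
  continuous f /\ exists M : R, forall x, `|f x| <= M.

(* Delta(V): Borel probability measures on R concentrated on V
   (V is compact, hence closed, so this is Delta(V) viewed inside Delta(R)). *)
Definition inDV (V : set R) (nu : probability R R) : Prop := nu (~` V) = 0%E.

(* the carrier; v0 \in V is used only to make the (nonempty) type pointed *)
Definition DV (V : set R) (v0 : R) (hv0 : V v0) := {nu : probability R R | inDV V nu}.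

Variables (V : set R) (v0 : R) (hv0 : V v0).

Lemma dirac_inDV : inDV V (\d_v0 : probability R R).
Proof. rewrite /inDV /= diracE memNset //=; by move=> /(_ hv0). Qed.

HB.instance Definition _ := gen_eqMixin (DV hv0).
HB.instance Definition _ := gen_choiceMixin (DV hv0).
HB.instance Definition _ := isPointed.Build (DV hv0) (exist _ _ dirac_inDV).

Definition ival (f : R -> R) (nu : DV hv0) : R := Rintegral (sval nu) setT f.

Definition weak_nbhs (nu : DV hv0) (A : set (DV hv0)) : Prop :=
  exists (n : nat) (fs : 'I_n -> R -> R) (e : R),
    0 < e /\ (forall i, bcont (fs i)) /\
    [set mu | forall i, `|ival (fs i) mu - ival (fs i) nu| < e] `<=` A.

Definition weak_open (A : set (DV hv0)) : Prop :=
  forall nu, A nu -> weak_nbhs nu A.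

Notation DVmeas := (g_sigma_algebraType weak_open).

Definition DDV := probability DVmeas R.

Definition wcontinuous (F : DV hv0 -> R) : Prop :=
  forall nu e, 0 < e -> weak_nbhs nu [set mu | `|F mu - F nu| < e].

Definition weak_conv (Pn : nat -> DDV) (P : DDV) : Prop :=
  forall F : DV hv0 -> R, wcontinuous F -> (exists M : R, forall nu, `|F nu| <= M) ->
    (fun n => Rintegral (Pn n) setT (F : DVmeas -> R)) @ \oo -->
      Rintegral P setT (F : DVmeas -> R).

Definition expect (nu : DV hv0) (f : R -> R) : R := Rintegral (sval nu) setT f.

Definition profit (c : R -> R) (p : R) (P : DDV) : \bar R :=
  (\int[P]_(nu in [set nu : DVmeas | (p <= expect nu id)%R])
      (p - expect nu c)%R%:E)%E.

End DeltaV.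

From HB Require Import structures.
From mathcomp Require Import all_boot all_order all_algebra.
From mathcomp Require Import all_classical all_reals all_analysis.
From mathcomp Require Import measurable_realfun lra.
Import Order.TTheory GRing.Theory Num.Theory.
Import numFieldNormedType.Exports.
Local Open Scope classical_set_scope.
Local Open Scope ring_scope.

(* The integrand of [profit c q] is [step_profit q] evaluated at the mean and
   the expected cost of [nu]; it jumps where the mean crosses [q]. Replacing the
   jump by a linear ramp of width [delta] gives functions of (mean, cost) that
   are continuous and satisfy
     step_(q+delta) - delta <= lower <= step_q <= upper <= step_(q-delta) + delta
   wherever cost <= mean, which holds because v - c v >= 0 on V. Mean and cost
   are integrals of bounded continuous functions (Tietze-extend [id] and [c]
   from the compact set V), so the envelopes are bounded weakly continuous
   functions on Delta(V): weak convergence passes their integrals to the limit,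
   and the two sandwiches bound the limsup and the liminf. *)

(* No measurability is assumed: in [profit] the cost [c] is only known to be
   continuous on V, and it is arbitrary on the null set ~` V. *)
Section integral_offnull.
Local Open Scope ereal_scope.
Context {d} {T : measurableType d} {R : realType} (mu : {measure set T -> \bar R}).
Variable N : set T.
Hypotheses (mN : measurable N) (muN0 : mu N = 0).
Import HBNNSimple.

Lemma ge0_le_integral_offnull (f g : T -> \bar R) :
  (forall x, 0 <= f x) -> (forall x, 0 <= g x) ->
  (forall x, ~ N x -> f x = g x) -> \int[mu]_x f x <= \int[mu]_x g x.
Proof.
move=> f0 g0 fg; rewrite (ge0_integralTE _ f0) (ge0_integralTE _ g0).
apply/ge_ereal_sup => _ [h /= hf <-].
(* [h] and its restriction [h'] to [~` N] agree off [N], and [h'] is below [g]. *)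
pose h' := proj_nnsfun h (measurableC mN).
have hh' : sintegral mu h = sintegral mu h'.
  have := integral_nnsfun mu measurableT h.
  have := integral_nnsfun mu measurableT h'.
  rewrite !patch_setT => <- <-.
  apply: ae_eq_integral => //; [exact/measurable_EFinP|exact/measurable_EFinP|].
  exists N; split => // x /= hx; apply: contrapT => Nx; apply: hx => _.
  by rewrite /mindic indicE mem_set //= mulr1.
rewrite hh'; apply: ereal_sup_ubound; exists h' => // x /=.
rewrite mindicE; case: (pselect (N x)) => Nx; first by rewrite memNset // mulr0.
by rewrite mem_set //= mulr1 -fg.
Qed.

Lemma eq_integral_offnull (f g : T -> \bar R) :
  (forall x, ~ N x -> f x = g x) -> \int[mu]_x f x = \int[mu]_x g x.
Proof.
move=> fg; rewrite integralE [in RHS]integralE.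
congr (_ - _); apply/le_anti/andP; split; apply: ge0_le_integral_offnull => //;
  by [exact: funepos_ge0 | exact: funeneg_ge0
     | move=> x Nx; rewrite ?funeposE ?funenegE fg].
Qed.

End integral_offnull.

Section probability_Rintegral.
Context {d} {T : measurableType d} {R : realType} (P : probability T R).

Lemma bounded_integrable (f : T -> R) (M : R) : measurable_fun setT f ->
  (forall x, `|f x| <= M) -> P.-integrable setT (EFin \o f).
Proof.
move=> mf fM; apply: measurable_bounded_integrable => //.
  by apply: (le_lt_trans (probability_le1 P measurableT)); rewrite ltry.
exists M; split; rewrite ?num_real // => y My x _ /=.
by rewrite (le_trans (fM x)) // ltW.
Qed.

Lemma Rintegral_cst_probability (a : R) : Rintegral P setT (fun=> a) = a.
Proof.
rewrite Rintegral_cst // (_ : (P : {measure set T -> \bar R}) setT = 1%E).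
  by rewrite mulr1.
exact: probability_setT.
Qed.

Lemma normr_Rintegral_le (f : T -> R) (M : R) : measurable_fun setT f ->
  (forall x, `|f x| <= M) -> `|Rintegral P setT f| <= M.
Proof.
move=> mf fM; have iM : P.-integrable setT (EFin \o fun=> M).
  by apply: (@bounded_integrable _ `|M|) => // x; rewrite normr_id.
rewrite -[leRHS]Rintegral_cst_probability.
apply: le_trans (le_normr_Rintegral _ _) _ => //.
  exact: bounded_integrable mf fM.
apply: le_Rintegral => //; apply: (@bounded_integrable _ M) => // [|x].
  exact: measurableT_comp.
by rewrite normr_id.
Qed.

Lemma le_Rintegral_addr (f g : T -> R) (a : R) :
  P.-integrable setT (EFin \o f) -> P.-integrable setT (EFin \o g) ->
  (forall x, f x <= g x + a) -> Rintegral P setT f <= Rintegral P setT g + a.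
Proof.
move=> fi gi fga; have ai : P.-integrable setT (EFin \o fun=> a).
  by apply: (@bounded_integrable _ `|a|).
rewrite -[X in _ + X]Rintegral_cst_probability -RintegralD //.
by apply: le_Rintegral => //; apply: eq_integrable (integrableD _ gi ai).
Qed.

End probability_Rintegral.
Arguments bounded_integrable {d T R} P {f M}.
Arguments normr_Rintegral_le {d T R} P {f M}.

Section limn_esup_einf.
Context {R : realType}.
Local Open Scope ereal_scope.
Implicit Types (u v : nat -> \bar R) (a : nat -> R) (l : R).

Lemma le_limn_esup u v : (forall n, u n <= v n) -> limn_esup u <= limn_esup v.
Proof.
move=> uv; rewrite !limn_esup_lim; apply: lee_lim; [exact: is_cvg_esups..|].
apply: nearW => n; apply: ge_ereal_sup => _ [k kn <-].
by apply: le_trans (uv k) _; apply: ereal_sup_ubound; exists k.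
Qed.

Lemma le_limn_einf u v : (forall n, u n <= v n) -> limn_einf u <= limn_einf v.
Proof. by move=> uv; rewrite leeN2; apply: le_limn_esup => n /=; rewrite leeN2. Qed.

Lemma limn_esup_le_limit u a l : (forall n, u n <= (a n)%:E) ->
  (a @ \oo --> l)%R -> limn_esup u <= l%:E.
Proof.
move=> ua al; have /cvg_limn_einf_sup[_ <-] : (fun n => (a n)%:E) @ \oo --> l%:E.
  by apply: cvg_EFin; [exact: nearW | exact: al].
exact: le_limn_esup.
Qed.

Lemma limit_le_limn_einf u a l : (forall n, (a n)%:E <= u n) ->
  (a @ \oo --> l)%R -> l%:E <= limn_einf u.
Proof.
move=> au al; have /cvg_limn_einf_sup[<- _] : (fun n => (a n)%:E) @ \oo --> l%:E.
  by apply: cvg_EFin; [exact: nearW | exact: al].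
exact: le_limn_einf.
Qed.

End limn_esup_einf.

Section envelopes.
Context {R : realType}.
Implicit Types (q dl x y : R).

Definition step_profit q x y := if q <= x then q - y else 0.

Definition ramp x := Num.min 1 (Num.max 0 x).

Lemma ramp_ge0 x : 0 <= ramp x.
Proof. by rewrite le_min ler01 le_max lexx. Qed.

Lemma ramp_le1 x : ramp x <= 1.
Proof. by rewrite ge_min lexx. Qed.

Lemma ramp_le0 x : x <= 0 -> ramp x = 0.
Proof. by move=> x0; rewrite /ramp max_l // min_r // ler01. Qed.

Lemma ramp_ge1 x : 1 <= x -> ramp x = 1.
Proof. by move=> x1; rewrite /ramp max_r ?(le_trans ler01) // min_l. Qed.

Lemma ramp_continuous : continuous ramp.
Proof.
move=> x; apply: (@continuous_min R R); first exact: cvg_cst.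
by apply: (@continuous_max R R); [exact: cvg_cst | exact: cvg_id].
Qed.

(* The naive [ramp ((x - q) / dl) * (q - y)] exceeds [q - y] on the ramp when
   [q - y < 0]; interpolating from [q - x <= q - y] instead stays below it. *)
Definition profit_lower q dl x y :=
  Num.min 0 (q - x) + ramp ((x - q) / dl) * (x - y).

Definition profit_upper q dl x y := ramp ((x - q) / dl + 1) * (q - y).

Lemma profit_lower_le q dl x y : 0 < dl -> y <= x ->
  profit_lower q dl x y <= step_profit q x y.
Proof.
move=> dl0 yx; have t1 := ramp_le1 ((x - q) / dl).
rewrite /profit_lower /step_profit; have [qx|xq] := leP q x.
  by rewrite min_r ?subr_le0 //; nra.
by rewrite ramp_le0 ?min_l; [lra | lra | rewrite pmulr_lle0 ?invr_gt0 //; lra].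
Qed.

Lemma step_profit_le_lower q dl x y : 0 < dl -> y <= x ->
  step_profit (q + dl) x y <= profit_lower q dl x y + dl.
Proof.
move=> dl0 yx; have t0 := ramp_ge0 ((x - q) / dl).
rewrite /profit_lower /step_profit; have [qx|xq] := leP (q + dl) x.
  by rewrite ramp_ge1 ?min_r; [lra | lra | rewrite ler_pdivlMr // mul1r; lra].
have : - dl <= Num.min 0 (q - x) by rewrite le_min; apply/andP; split; lra.
nra.
Qed.

Lemma step_profit_le_upper q dl x y : 0 < dl -> y <= x ->
  step_profit q x y <= profit_upper q dl x y.
Proof.
move=> dl0 yx; have t0 := ramp_ge0 ((x - q) / dl + 1).
rewrite /profit_upper /step_profit; have [qx|xq] := leP q x; last nra.
by rewrite ramp_ge1 ?mul1r // lerDr divr_ge0 ?subr_ge0 // ltW.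
Qed.

Lemma profit_upper_le q dl x y : 0 < dl -> y <= x ->
  profit_upper q dl x y <= step_profit (q - dl) x y + dl.
Proof.
move=> dl0 yx; have t1 := ramp_le1 ((x - q) / dl + 1).
rewrite /profit_upper /step_profit; have [qx|xq] := leP q x.
  rewrite ramp_ge1 ?mul1r ?ifT; [lra | lra |].
  by rewrite lerDr divr_ge0 ?subr_ge0 // ltW.
have [qdx|xqd] := leP (q - dl) x; first nra.
rewrite ramp_le0; first lra.
by rewrite -lerBrDr sub0r ler_pdivrMr // mulN1r; lra.
Qed.

End envelopes.

Section envelope_continuity.
Context {R : realType}.
Variables q dl : R.

Lemma profit_lower_continuous :
  continuous (fun z : R * R => profit_lower q dl z.1 z.2).
Proof.
move=> z; apply: cvgD.
  apply: (@continuous_min R _ (fun=> 0) (fun z : R * R => q - z.1)).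
    exact: cvg_cst.
  by apply: cvgB; [exact: cvg_cst | exact: cvg_fst].
apply: cvgM; last by apply: cvgB; [exact: cvg_fst | exact: cvg_snd].
apply: (@continuous_comp _ _ _ (fun z : R * R => (z.1 - q) / dl) ramp).
  by apply: cvgM; [apply: cvgB; [exact: cvg_fst | exact: cvg_cst] | exact: cvg_cst].
exact: ramp_continuous.
Qed.

Lemma profit_upper_continuous :
  continuous (fun z : R * R => profit_upper q dl z.1 z.2).
Proof.
move=> z; apply: cvgM; last by apply: cvgB; [exact: cvg_cst | exact: cvg_snd].
apply: (@continuous_comp _ _ _ (fun z : R * R => (z.1 - q) / dl + 1) ramp).
  apply: cvgD; last exact: cvg_cst.
  by apply: cvgM; [apply: cvgB; [exact: cvg_fst | exact: cvg_cst] | exact: cvg_cst].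
exact: ramp_continuous.
Qed.

End envelope_continuity.

Lemma compact_normr_bounded {R : realType} (A : set R) : compact A ->
  exists2 M, 0 < M & forall x, A x -> `|x| <= M.
Proof.
move=> /compact_bounded[M [_ HM]]; exists (`|M| + 1); first by rewrite ltr_wpDl.
by move=> x Ax; apply: HM Ax; rewrite (le_lt_trans (ler_norm M)) // ltrDl.
Qed.

Lemma continuous_bounded_square {R : realType} (phi : R * R -> R) (M : R) :
  continuous phi ->
  exists K, forall x y, `|x| <= M -> `|y| <= M -> `|phi (x, y)| <= K.
Proof.
move=> cphi; have cS : compact (`[- M, M] `*` `[- M, M]).
  by apply: compact_setX; exact: segment_compact.
have [K _ HK] :=
  compact_normr_bounded _ (continuous_compact (continuous_subspaceT cphi) cS).
exists K => x y xM yM; apply: HK; exists (x, y) => //.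
by split; rewrite /= in_itv /= -ler_norml.
Qed.

Lemma bcont_extension {R : realType} (A : set R) (f : R -> R) : compact A ->
  {within A, continuous f} -> exists2 g, bcont g & forall x, A x -> g x = f x.
Proof.
move=> cA cf; have [M M0 HM] := compact_normr_bounded _ (continuous_compact cf cA).
have [|g [fg cg gM]] := @continuous_bounded_extension R R (@pseudometric_normal R R)
  A (compact_closed (@Rhausdorff R) cA) (f : R -> R^o) _ M0 cf.
  by move=> x Ax; apply: HM; exists x.
by exists g; [split=> //; exists M | move=> x /mem_set /fg].
Qed.

Section weak_topology.
Context {R : realType} {V : set R} {v0 : R} {hv0 : V v0}.
Local Notation D := (DV hv0).
Local Notation DVmeas := (g_sigma_algebraType (@weak_open R V v0 hv0)).

Lemma wcontinuous_ival (g : R -> R) : bcont g -> wcontinuous (ival g : D -> R).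
Proof.
by move=> bg nu e e0; exists 1%N, (fun=> g), e; split=> //; split=> // mu /(_ ord0).
Qed.

Lemma wcontinuous_ival2 (g1 g2 : R -> R) (phi : R * R -> R) :
  bcont g1 -> bcont g2 -> continuous phi ->
  wcontinuous (fun nu : D => phi (ival g1 nu, ival g2 nu)).
Proof.
move=> b1 b2 cphi nu e e0.
have /cvgrPdist_lt/(_ e e0)/nbhs_ballP[r r0 rphi] := cphi (ival g1 nu, ival g2 nu).
exists 2%N, (fun i : 'I_2 => if val i == 0%N then g1 else g2), r.
split=> //; split=> [i|mu /= mu_near]; first by case: ifP.
rewrite distrC; apply: rphi; split; rewrite /ball /= distrC.
  exact: (mu_near ord0).
exact: (mu_near (Ordinal (isT : (1 < 2)%N))).
Qed.

Lemma wcontinuous_measurable (F : D -> R) :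
  wcontinuous F -> measurable_fun [set: DVmeas] (F : DVmeas -> R).
Proof.
move=> cF; apply: (measurability _ (RGenInftyO.measurableE R)) => _ [_ [x ->] <-].
rewrite setTI; apply: sub_sigma_algebra => nu /=; rewrite in_itv /= => Fnu.
have Fx : 0 < x - F nu by rewrite subr_gt0.
have [n [fs [e [e0 [bfs sub]]]]] := cF nu _ Fx.
exists n, fs, e; split=> //; split=> // mu /sub /=; rewrite in_itv /=.
by have := ler_norm (F mu - F nu); lra.
Qed.

Lemma ival_measurable (g : R -> R) :
  bcont g -> measurable_fun [set: DVmeas] (ival g : DVmeas -> R).
Proof. by move=> bg; apply: wcontinuous_measurable; exact: wcontinuous_ival. Qed.

Lemma bcont_integrable (g : R -> R) (nu : D) :
  bcont g -> (sval nu).-integrable setT (EFin \o g).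
Proof.
by case=> cg [M gM]; apply: bounded_integrable gM; exact: continuous_measurable_fun.
Qed.

Lemma ival_bounded (g : R -> R) (M : R) (nu : D) :
  bcont g -> (forall x, `|g x| <= M) -> `|ival g nu| <= M.
Proof.
by case=> cg _; apply: normr_Rintegral_le; exact: continuous_measurable_fun.
Qed.

Lemma ivalB (f g : R -> R) (nu : D) : bcont f -> bcont g ->
  ival (fun x => f x - g x) nu = ival f nu - ival g nu.
Proof. by move=> bf bg; apply: RintegralB => //; exact: bcont_integrable. Qed.

Lemma expect_ival (f g : R -> R) (nu : D) : measurable V ->
  (forall x, V x -> g x = f x) -> expect nu f = ival g nu.
Proof.
move=> mV gf; congr fine.
apply: (eq_integral_offnull _ _ (measurableC mV) (svalP nu)).
by move=> x /= nVx; rewrite gf //; exact: contrapT.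
Qed.

Lemma ival_ge0 (g : R -> R) (nu : D) : measurable V ->
  (forall x, V x -> 0 <= g x) -> 0 <= ival g nu.
Proof.
move=> mV g0; rewrite -(@expect_ival (fun x => Num.max (g x) 0)) //.
  by apply: Rintegral_ge0 => x _; rewrite le_max lexx orbT.
by move=> x Vx; rewrite max_l // g0.
Qed.

End weak_topology.

Section profit_bounds.
Context {R : realType} {V : set R} {v0 : R} {hv0 : V v0}.
Local Notation D := (DV hv0).
Local Notation DVmeas := (g_sigma_algebraType (@weak_open R V v0 hv0)).
Context {c gm gc : R -> R}.
Hypotheses (mV : measurable V) (bm : bcont gm) (bc : bcont gc).
Hypotheses (gmE : forall x, V x -> gm x = x) (gcE : forall x, V x -> gc x = c x).
Hypothesis c_le : forall v, V v -> 0 <= v - c v.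

Local Notation mean := (@ival R V v0 hv0 gm).
Local Notation cost := (@ival R V v0 hv0 gc).

Lemma cost_le_mean (nu : D) : cost nu <= mean nu.
Proof.
rewrite -subr_ge0 -ivalB //; apply: ival_ge0 => // x Vx.
by rewrite gmE // gcE //; exact: c_le.
Qed.

Section envelope.
Variable phi : R * R -> R.
Hypothesis phi_continuous : continuous phi.
Local Notation F := (fun nu : D => phi (mean nu, cost nu)).

Lemma envelope_bounded : exists K, forall nu, `|F nu| <= K.
Proof.
have [[_ [Mm gmM]] [_ [Mc gcM]]] := (bm, bc).
have [K FK] := continuous_bounded_square phi (Num.max Mm Mc) phi_continuous.
exists K => nu; apply: FK; apply: ival_bounded => // x.
  by rewrite le_max gmM.
by rewrite le_max gcM orbT.
Qed.

Lemma envelope_integrable (P : DDV hv0) :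
  P.-integrable setT (EFin \o (F : DVmeas -> R)).
Proof.
have [K FK] := envelope_bounded; apply: (bounded_integrable P (M := K) _ FK).
by apply: wcontinuous_measurable; exact: wcontinuous_ival2.
Qed.

Lemma envelope_cvg (Pn : nat -> DDV hv0) (P : DDV hv0) : weak_conv Pn P ->
  (fun n => Rintegral (Pn n) setT (F : DVmeas -> R)) @ \oo -->
    Rintegral P setT (F : DVmeas -> R).
Proof. by apply; [exact: wcontinuous_ival2 | exact: envelope_bounded]. Qed.

End envelope.

Local Notation step q := (fun nu : D => step_profit q (mean nu) (cost nu)).

Lemma step_profit_patch q :
  step q = (fun nu => q - cost nu) \_ [set nu | q <= mean nu].
Proof.
by apply/funext => nu; rewrite patchE /step_profit /= /in_mem /= /in_set asboolb.
Qed.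

Lemma measurable_mean_ge q : measurable [set nu : DVmeas | q <= mean nu].
Proof.
rewrite [X in measurable X](_ : _ = setT `&` mean @^-1` `[q, +oo[).
  exact: (ival_measurable (hv0 := hv0) _ bm) measurableT _ (measurable_itv _).
by apply/seteqP; split => nu /=; rewrite in_itv /= andbT => //; case.
Qed.

Lemma step_profit_integrable q (P : DDV hv0) :
  P.-integrable setT (EFin \o (step q : DVmeas -> R)).
Proof.
have [_ [Mc gcM]] := bc; have Mc0 : 0 <= Mc := le_trans (normr_ge0 _) (gcM 0).
apply: (bounded_integrable P (M := `|q| + Mc)) => [|nu].
  rewrite step_profit_patch; apply/(measurable_restrictT _ (measurable_mean_ge q)).
  apply: measurable_funS (measurable_funB (measurable_cst q)
    (ival_measurable (hv0 := hv0) _ bc)) => //.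
rewrite /step_profit; case: ifP => _; last by rewrite normr0 addr_ge0.
by rewrite (le_trans (ler_normB _ _)) // lerD2l ival_bounded.
Qed.

Lemma profitE q (P : DDV hv0) :
  profit c q P = (Rintegral P setT (step q : DVmeas -> R))%:E.
Proof.
rewrite /Rintegral fineK; last exact/integrable_fin_num/step_profit_integrable.
rewrite /profit [LHS]integral_mkcond; apply: eq_integral => nu _.
rewrite patchE /step_profit /= /in_mem /= /in_set asboolb.
by rewrite (expect_ival _ _ _ mV gmE) (expect_ival _ _ _ mV gcE); case: ifP.
Qed.

Lemma limn_esup_profit_le (Pn : nat -> DDV hv0) (P : DDV hv0) (p dl : R) :
  weak_conv Pn P -> 0 < dl ->
  (limn_esup (fun n => profit c (p + dl) (Pn n)) - dl%:E <= profit c p P)%E.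
Proof.
move=> wc dl0; pose lower (z : R * R) := profit_lower p dl z.1 z.2.
have clower : continuous lower := profit_lower_continuous p dl.
have ilower := envelope_integrable _ clower.
pose I (Q : DDV hv0) :=
  Rintegral Q setT (fun nu : DVmeas => lower (mean nu, cost nu)).
have cv : (fun n => I (Pn n) + dl) @ \oo --> I P + dl.
  by apply: cvgD; [exact: envelope_cvg | exact: cvg_cst].
have le_n n : (profit c (p + dl) (Pn n) <= (I (Pn n) + dl)%:E)%E.
  rewrite profitE lee_fin.
  apply: le_Rintegral_addr; [exact: step_profit_integrable | exact: ilower |].
  by move=> nu; apply: step_profit_le_lower => //; exact: cost_le_mean.
rewrite leeBlDr //; apply: le_trans (limn_esup_le_limit _ _ _ le_n cv) _.
rewrite profitE lee_fin lerD2r.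
apply: le_Rintegral => //; [exact: ilower | exact: step_profit_integrable |].
by move=> nu _; apply: profit_lower_le => //; exact: cost_le_mean.
Qed.

Lemma profit_le_limn_einf (Pn : nat -> DDV hv0) (P : DDV hv0) (p dl : R) :
  weak_conv Pn P -> 0 < dl ->
  (profit c p P <= limn_einf (fun n => profit c (p - dl) (Pn n)) + dl%:E)%E.
Proof.
move=> wc dl0; pose upper (z : R * R) := profit_upper p dl z.1 z.2.
have cupper : continuous upper := profit_upper_continuous p dl.
have iupper := envelope_integrable _ cupper.
pose I (Q : DDV hv0) :=
  Rintegral Q setT (fun nu : DVmeas => upper (mean nu, cost nu)).
have cv : (fun n => I (Pn n) - dl) @ \oo --> I P - dl.
  by apply: cvgB; [exact: envelope_cvg | exact: cvg_cst].
have ge_n n : ((I (Pn n) - dl)%:E <= profit c (p - dl) (Pn n))%E.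
  rewrite profitE lee_fin lerBlDr.
  apply: le_Rintegral_addr; [exact: iupper | exact: step_profit_integrable |].
  by move=> nu; apply: profit_upper_le => //; exact: cost_le_mean.
rewrite -leeBlDr //; apply: le_trans (limit_le_limn_einf _ _ _ ge_n cv).
rewrite profitE lee_fin lerBrDr subrK.
apply: le_Rintegral => //; [exact: step_profit_integrable | exact: iupper |].
by move=> nu _; apply: step_profit_le_upper => //; exact: cost_le_mean.
Qed.

End profit_bounds.

Theorem lemmaH1 (R : realType) (V : set R) (v0 : R) (hv0 : V v0) (c : R -> R) :
  compact V ->
  {within V, continuous c} ->
  (forall v, V v -> 0 <= v - c v) ->
  forall (Pn : nat -> DDV hv0) (Pstar : DDV hv0),
  weak_conv Pn Pstar ->
  forall (p delta : R), 0 < delta ->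
    (limn_esup (fun n => profit c (p + delta) (Pn n)) - delta%:E
       <= profit c p Pstar)%E /\
    (profit c p Pstar
       <= limn_einf (fun n => profit c (p - delta) (Pn n)) + delta%:E)%E.
Proof.
move=> cV cc c_le Pn Ps wc p dl dl0.
have mV : measurable V := compact_measurable cV.
have cid : {within V, continuous id}.
  by apply: continuous_subspaceT => x; exact: cvg_id.
have [gm bm gmE] := bcont_extension _ _ cV cid.
have [gc bc gcE] := bcont_extension _ _ cV cc.
split; first exact: (limn_esup_profit_le mV bm bc gmE gcE c_le).
exact: (profit_le_limn_einf mV bm bc gmE gcE c_le).
Qed.
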